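(* Let $0<A,B\le1$ with $L(A,B)<R(A,B)$. Then for $U\in[L(A,B),R(A,B)]$, \[ \frac1\pi G'_{A,B}(U)=(A+B)\sin(\pi U)+B\kappa\sin(\pi M(U))+A\varepsilon\sin(\pi N(U)), \] and $G_{A,B}$ is strictly increasing on $[L(A,B),R(A,B)]$.
   Context: For $0<A,B\le1$ put $\kappa=\sqrt{1-A^2}$, $\varepsilon=\sqrt{1-B^2}$, $P=P(A,B)=\frac{1+AB}{B(A+B)}$, $M(U)=\kappa(P-U)$, $N(U)=\varepsilon\left(U+\frac{\kappa^2}{A(A+B)}\right)$, and $G_{A,B}(U)=B\cos(\pi M(U))-A\cos(\pi N(U))-(A+B)\cos(\pi U)$. Further $L(A,B)=\frac{\kappa}{1+\kappa}\frac{1+AB}{B(A+B)}$ and $R(A,B)=\frac{1-\varepsilon\kappa^2/[A(A+B)]}{1+\varepsilon}$. *)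

From Stdlib Require Import Reals.
Open Scope R_scope.

Definition kap (A : R) : R := sqrt (1 - A ^ 2).
Definition eps (B : R) : R := sqrt (1 - B ^ 2).
Definition PAB (A B : R) : R := (1 + A * B) / (B * (A + B)).
Definition Mf (A B U : R) : R := kap A * (PAB A B - U).
Definition Nf (A B U : R) : R := eps B * (U + kap A ^ 2 / (A * (A + B))).
Definition Gf (A B U : R) : R :=
  B * cos (PI * Mf A B U) - A * cos (PI * Nf A B U) - (A + B) * cos (PI * U).
Definition Lb (A B : R) : R := kap A / (1 + kap A) * ((1 + A * B) / (B * (A + B))).
Definition Rb (A B : R) : R :=
  (1 - eps B * kap A ^ 2 / (A * (A + B))) / (1 + eps B).

From Stdlib Require Import Reals Lra Psatz.
From Coquelicot Require Import Coquelicot.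
Open Scope R_scope.

(* The
   bounds L < U < R are exactly what places U, M(U) and N(U) in [0, 1] (indeed
   M(U) <= U and N(U) <= 1 - U), where sin(pi x) >= 0, with sin(pi U) > 0;
   strict monotonicity then follows from the mean value theorem. *)

Definition dGf (A B U : R) : R :=
  PI * ((A + B) * sin (PI * U) + B * kap A * sin (PI * Mf A B U)
        + A * eps B * sin (PI * Nf A B U)).

Lemma Gf_derivative (A B U : R) : derivable_pt_lim (Gf A B) U (dGf A B U).
Proof.
  apply is_derive_Reals; unfold Gf, dGf, Mf, Nf.
  auto_derive; [exact I|].
  replace (kap A * (kap A * 1)) with (kap A ^ 2) by ring.
  replace (PAB A B + - U) with (PAB A B - U) by ring.
  ring.
Qed.

Lemma strict_increasing_of_derivative_pos (f f' : R -> R) (a b : R) :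
  (forall x, derivable_pt_lim f x (f' x)) ->
  (forall x, a < x < b -> 0 < f' x) ->
  forall u v, a <= u -> v <= b -> u < v -> f u < f v.
Proof.
  intros Hd Hpos u v Hu Hv Huv.
  destruct (MVT_cor2 f f' u v Huv (fun c _ => Hd c)) as [c [Hfc Hc]].
  assert (0 < f' c) by (apply Hpos; lra).
  nra.
Qed.

Lemma sin_PI_mul_ge0 (x : R) : 0 <= x <= 1 -> 0 <= sin (PI * x).
Proof. intros Hx; pose proof PI_RGT_0; apply sin_ge_0; nra. Qed.

Section Bounds.

Variables A B : R.
Hypothesis hA : 0 < A <= 1.
Hypothesis hB : 0 < B <= 1.

Lemma PAB_ge1 : 1 <= PAB A B.
Proof. unfold PAB; apply Rcomplements.Rle_div_r; nra. Qed.

Lemma kap2_div_ge0 : 0 <= kap A ^ 2 / (A * (A + B)).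
Proof. apply Rdiv_le_0_compat; nra. Qed.

Lemma Lb_ge0 : 0 <= Lb A B.
Proof.
  pose proof (sqrt_pos (1 - A ^ 2)); pose proof PAB_ge1.
  unfold Lb; fold (PAB A B).
  apply Rmult_le_pos; [apply Rdiv_le_0_compat|]; unfold kap; lra.
Qed.

Lemma Rb_le1 : Rb A B <= 1.
Proof.
  pose proof (sqrt_pos (1 - B ^ 2)); pose proof kap2_div_ge0.
  unfold Rb; apply Rcomplements.Rle_div_l; fold (eps B) in *; [lra|].
  assert (0 <= eps B * (kap A ^ 2 / (A * (A + B)))) by (apply Rmult_le_pos; lra).
  unfold Rdiv in *; rewrite Rmult_assoc; lra.
Qed.

Lemma Mf_bounds (U : R) : Lb A B < U <= 1 -> 0 <= Mf A B U <= U.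
Proof.
  intros [HL HU1]; pose proof PAB_ge1.
  assert (Hk : 0 <= kap A) by apply sqrt_pos.
  unfold Lb in HL; fold (PAB A B) in HL.
  assert (kap A * PAB A B < (1 + kap A) * U).
  { replace (kap A * PAB A B) with ((1 + kap A) * (kap A / (1 + kap A) * PAB A B))
      by (field; lra).
    apply Rmult_lt_compat_l; lra. }
  unfold Mf; nra.
Qed.

Lemma Nf_bounds (U : R) : 0 <= U < Rb A B -> 0 <= Nf A B U <= 1 - U.
Proof.
  intros [HU0 HR]; pose proof kap2_div_ge0.
  assert (He : 0 <= eps B) by apply sqrt_pos.
  unfold Rb in HR.
  assert ((1 + eps B) * U < 1 - eps B * (kap A ^ 2 / (A * (A + B)))).
  { replace (1 - eps B * (kap A ^ 2 / (A * (A + B))))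
      with ((1 + eps B) * ((1 - eps B * kap A ^ 2 / (A * (A + B))) / (1 + eps B)))
      by (field; nra).
    apply Rmult_lt_compat_l; lra. }
  unfold Nf; nra.
Qed.

Lemma dGf_pos (U : R) : Lb A B < U < Rb A B -> 0 < dGf A B U.
Proof.
  intros [HL HR]; pose proof Lb_ge0; pose proof Rb_le1; pose proof PI_RGT_0.
  assert (Hk : 0 <= kap A) by apply sqrt_pos.
  assert (He : 0 <= eps B) by apply sqrt_pos.
  pose proof (Mf_bounds U ltac:(lra)); pose proof (Nf_bounds U ltac:(lra)).
  assert (0 < sin (PI * U)) by (apply sin_gt_0; nra).
  assert (0 <= sin (PI * Mf A B U)) by (apply sin_PI_mul_ge0; lra).
  assert (0 <= sin (PI * Nf A B U)) by (apply sin_PI_mul_ge0; lra).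
  assert (0 <= B * kap A * sin (PI * Mf A B U)) by (apply Rmult_le_pos; nra).
  assert (0 <= A * eps B * sin (PI * Nf A B U)) by (apply Rmult_le_pos; nra).
  unfold dGf; apply Rmult_lt_0_compat; nra.
Qed.

End Bounds.

Theorem lemma3p3 (A B : R) (hA : 0 < A <= 1) (hB : 0 < B <= 1)
  (hLR : Lb A B < Rb A B) :
  (forall U : R, Lb A B <= U <= Rb A B ->
     derivable_pt_lim (Gf A B) U
       (PI * ((A + B) * sin (PI * U) + B * kap A * sin (PI * Mf A B U)
              + A * eps B * sin (PI * Nf A B U)))) /\
  (forall U V : R, Lb A B <= U <= Rb A B -> Lb A B <= V <= Rb A B ->
     U < V -> Gf A B U < Gf A B V).
Proof.
  split.
  - intros U _; exact (Gf_derivative A B U).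
  - intros U V [HU _] [_ HV].
    apply (strict_increasing_of_derivative_pos _ (dGf A B) (Lb A B) (Rb A B));
      [exact (Gf_derivative A B) | exact (dGf_pos A B hA hB) | exact HU | exact HV].
Qed.
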